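(* Let $\gamma\in(0,1)$, $c\in\mathbb{R}$, $\sigma^2>0$, and $\alpha_0\in(0,1]$. Define recursively, for $n\ge2$, $$\alpha_{n-1}=\frac{(1-\gamma)\lambda^{n-1}\sigma^2+\big(1-(1-\gamma)\delta^{n-1}\big)^2c^2}{(1-\gamma)^2\lambda^{n-1}\sigma^2+\big(1-(1-\gamma)\delta^{n-1}\big)^2c^2+\sigma^2},$$ where $\delta^1=\alpha_0$, $\lambda^1=\alpha_0^2$, and for $m>1$, $\delta^m=\alpha_{m-1}+(1-(1-\gamma)\alpha_{m-1})\delta^{m-1}$, $\lambda^m=\alpha_{m-1}^2+(1-(1-\gamma)\alpha_{m-1})^2\lambda^{m-1}$. Then $\lim_{n\to\infty}\alpha_{n-1}=0$.
   Context: The formula for $\alpha_{n-1}$ is the prediction-error-minimizing stepsize for approximate value iteration in a single-state, single-action problem with i.i.d. rewards of mean $c$, variance $\sigma^2$, and discount factor $\gamma$. *)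

From Stdlib Require Import Reals.
Open Scope R_scope.

(* state g c s2 a0 k = (alpha_k, delta^(k+1), lambda^(k+1)).
   s2 stands for sigma^2. *)
Fixpoint state (g c s2 a0 : R) (k : nat) : R * R * R :=
  match k with
  | O => (a0, a0, a0 ^ 2)
  | S k' =>
      let '(_, d, l) := state g c s2 a0 k' in
      let a := ((1 - g) * l * s2 + (1 - (1 - g) * d) ^ 2 * c ^ 2) /
               ((1 - g) ^ 2 * l * s2 + (1 - (1 - g) * d) ^ 2 * c ^ 2 + s2) in
      (a, a + (1 - (1 - g) * a) * d, a ^ 2 + (1 - (1 - g) * a) ^ 2 * l)
  end.

Definition alpha (g c s2 a0 : R) (k : nat) : R :=
  fst (fst (state g c s2 a0 k)).
Definition delta (g c s2 a0 : R) (m : nat) : R :=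
  snd (fst (state g c s2 a0 (Nat.pred m))).
Definition lam (g c s2 a0 : R) (m : nat) : R :=
  snd (state g c s2 a0 (Nat.pred m)).

(* Write P_k = (1-g)^2 lam s + Y_k, Y_k = (1-(1-g) delta)^2 c^2, for the prediction error after k
   updates. One update satisfies the exact identity P_{k+1} (s + P_k) = s P_k + g^2 Y_k^2,
   and as 0 <= Y_k <= P_k this gives P_{k+1} <= P_k and 1/P_{k+1} >= 1/P_k + (1 - g^2)/(s + P_0):
   the reciprocals grow linearly, so P_k -> 0.
   Since alpha_{k+1} (1-g) s <= P_k, the stepsizes tend to 0 as well. *)
From Stdlib Require Import Reals Lra Lia Psatz.
Open Scope R_scope.

Lemma cv_infty_of_increment (v : nat -> R) (kappa : R) :
  0 < kappa -> (forall k, v k + kappa <= v (S k)) -> cv_infty v.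
Proof.
  intros Hk Hv.
  assert (Hlin : forall k, v 0%nat + INR k * kappa <= v k).
  { induction k as [|k IH]; [simpl; lra|]. rewrite S_INR. specialize (Hv k). lra. }
  intros M.
  destruct (INR_archimed kappa (Rabs M + Rabs (v 0%nat)) Hk) as [N HN].
  exists N. intros n Hn.
  assert (INR N <= INR n) by (apply le_INR; lia).
  specialize (Hlin n).
  pose proof (Rle_abs M). pose proof (Rle_abs (- v 0%nat)). rewrite Rabs_Ropp in *.
  nra.
Qed.

Lemma Un_cv_0_of_inv_increment (u : nat -> R) (kappa : R) :
  0 < kappa -> (forall k, / u k + kappa <= / u (S k)) -> Un_cv u 0.
Proof.
  intros Hk Hu eps Heps.
  destruct (cv_infty_cv_0 _ (cv_infty_of_increment _ _ Hk Hu) eps Heps) as [N HN].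
  exists N. intros n Hn. rewrite <- (Rinv_inv (u n)). exact (HN n Hn).
Qed.

Lemma Un_cv_0_squeeze (u v : nat -> R) (C : R) :
  (forall n, 0 <= v n <= C * u n) -> Un_cv u 0 -> Un_cv v 0.
Proof.
  intros Hvu Hu eps Heps.
  set (C' := Rabs C + 1).
  assert (HC' : 0 < C') by (unfold C'; pose proof (Rabs_pos C); lra).
  destruct (Hu (eps / C')) as [N HN]; [apply Rdiv_lt_0_compat; lra|].
  exists N. intros n Hn. specialize (HN n Hn). specialize (Hvu n).
  unfold R_dist in *. rewrite Rminus_0_r in *. rewrite Rabs_right by lra.
  assert (HCu : C * u n <= C' * Rabs (u n)).
  { pose proof (Rle_abs (C * u n)). rewrite Rabs_mult in *.
    pose proof (Rabs_pos (u n)). unfold C'. nra. }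
  assert (C' * Rabs (u n) < eps).
  { apply (Rmult_lt_compat_l C') in HN; [|lra]. unfold Rdiv in HN.
    rewrite (Rmult_comm eps), <- Rmult_assoc, Rinv_r, Rmult_1_l in HN by lra. exact HN. }
  lra.
Qed.

Lemma inv_increment_of_err_step (s q P P' Y : R) :
  0 < s -> 0 <= q <= 1 -> 0 <= Y <= P -> 0 < P ->
  P' * (s + P) = s * P + q * Y ^ 2 ->
  0 < P' /\ P' <= P /\ / P + (1 - q) / (s + P) <= / P'.
Proof.
  intros Hs Hq HY HP Hid.
  assert (HP' : 0 < P').
  { assert (0 < s * P) by nra. assert (0 <= q * Y ^ 2) by nra.
    destruct (Rle_lt_dec P' 0); [nra|lra]. }
  assert (Hcontr : P' * (s + P) <= P * (s + q * P)).
  { rewrite Hid. assert (Y ^ 2 <= P ^ 2) by nra.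
    assert (0 <= q * (P ^ 2 - Y ^ 2)) by (apply Rmult_le_pos; lra). nra. }
  assert (HqP : q * P <= P) by nra.
  split; [exact HP'|split].
  - apply (Rmult_le_reg_r (s + P)); [lra|].
    assert (0 <= P * (P - q * P)) by (apply Rmult_le_pos; lra). nra.
  - assert (/ P + (1 - q) / (s + P) <= / P + (1 - q) / (s + q * P)).
    { apply Rplus_le_compat_l. unfold Rdiv. apply Rmult_le_compat_l; [lra|].
      apply Rinv_le_contravar; nra. }
    assert (HqP0 : 0 <= q * P) by (apply Rmult_le_pos; lra).
    assert (Hbound : P' <= P * (s + q * P) / (s + P)).
    { apply (Rmult_le_reg_r (s + P)); [lra|]. unfold Rdiv.
      rewrite Rmult_assoc, Rinv_l, Rmult_1_r by lra. exact Hcontr. }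
    assert (/ P + (1 - q) / (s + q * P) = / (P * (s + q * P) / (s + P))) by (field; lra).
    assert (/ (P * (s + q * P) / (s + P)) <= / P') by (apply Rinv_le_contravar; lra).
    lra.
Qed.

Definition pred_err (g c s l d : R) : R :=
  (1 - g) ^ 2 * l * s + (1 - (1 - g) * d) ^ 2 * c ^ 2.

Definition gain (g c s l d : R) : R :=
  ((1 - g) * l * s + (1 - (1 - g) * d) ^ 2 * c ^ 2) / (pred_err g c s l d + s).

Section Update.

Variables g c s l d : R.
Hypotheses (Hg : 0 <= g <= 1) (Hs : 0 < s) (Hl : 0 <= l).

Let bias : R := (1 - (1 - g) * d) ^ 2 * c ^ 2.

Lemma bias_bounds : 0 <= bias <= pred_err g c s l d.
Proof.
  unfold bias, pred_err.
  assert (0 <= (1 - g) ^ 2 * l * s) by (apply Rmult_le_pos; [apply Rmult_le_pos|]; nra).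
  assert (0 <= (1 - (1 - g) * d) ^ 2 * c ^ 2) by (apply Rmult_le_pos; apply pow2_ge_0).
  lra.
Qed.

Lemma pred_err_update :
  let a := gain g c s l d in
  pred_err g c s (a ^ 2 + (1 - (1 - g) * a) ^ 2 * l) (a + (1 - (1 - g) * a) * d)
    * (s + pred_err g c s l d)
  = s * pred_err g c s l d + g ^ 2 * bias ^ 2.
Proof.
  pose proof bias_bounds. unfold gain, pred_err, bias in *. field. lra.
Qed.

Lemma gain_scaled_le : gain g c s l d * ((1 - g) * s) <= pred_err g c s l d.
Proof.
  pose proof bias_bounds as [Hb0 HbP].
  unfold gain. fold bias. unfold Rdiv.
  rewrite Rmult_comm, <- Rmult_assoc.
  apply (Rmult_le_reg_r (pred_err g c s l d + s)); [lra|].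
  rewrite Rmult_assoc, Rinv_l, Rmult_1_r by lra.
  unfold pred_err. fold bias.
  (* After expansion only (1 - g) s bias <= s bias + pred_err^2 remains. *)
  assert (0 <= g * bias * s) by (apply Rmult_le_pos; [apply Rmult_le_pos|]; lra).
  assert (0 <= ((1 - g) ^ 2 * l * s + bias) ^ 2) by apply pow2_ge_0.
  nra.
Qed.

Lemma gain_nonneg : 0 <= gain g c s l d.
Proof.
  pose proof bias_bounds. unfold gain. fold bias.
  apply Rmult_le_pos; [|apply Rlt_le, Rinv_0_lt_compat; lra].
  assert (0 <= (1 - g) * l * s) by (apply Rmult_le_pos; [apply Rmult_le_pos|]; lra). lra.
Qed.

End Update.

Section Stepsizes.

Variables g c s a0 : R.

Lemma alpha_succ k :
  alpha g c s a0 (S k) = gain g c s (lam g c s a0 (S k)) (delta g c s a0 (S k)).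
Proof. unfold alpha, lam, delta; simpl. now destruct (state g c s a0 k) as [[? ?] ?]. Qed.

Lemma lam_succ k :
  lam g c s a0 (S (S k))
  = alpha g c s a0 (S k) ^ 2 + (1 - (1 - g) * alpha g c s a0 (S k)) ^ 2 * lam g c s a0 (S k).
Proof. unfold alpha, lam; simpl. now destruct (state g c s a0 k) as [[? ?] ?]. Qed.

Lemma delta_succ k :
  delta g c s a0 (S (S k))
  = alpha g c s a0 (S k) + (1 - (1 - g) * alpha g c s a0 (S k)) * delta g c s a0 (S k).
Proof. unfold alpha, delta; simpl. now destruct (state g c s a0 k) as [[? ?] ?]. Qed.

Definition pred_err_seq (k : nat) : R := pred_err g c s (lam g c s a0 (S k)) (delta g c s a0 (S k)).

Lemma lam_nonneg k : 0 <= lam g c s a0 (S k).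
Proof.
  induction k as [|k IH].
  - unfold lam; simpl. nra.
  - rewrite lam_succ. pose proof (pow2_ge_0 (alpha g c s a0 (S k))).
    pose proof (pow2_ge_0 (1 - (1 - g) * alpha g c s a0 (S k))). nra.
Qed.

Hypotheses (Hg : 0 < g < 1) (Hs : 0 < s) (Ha0 : 0 < a0 <= 1).

Lemma pred_err_seq_step k :
  0 < pred_err_seq k ->
  0 < pred_err_seq (S k) /\ pred_err_seq (S k) <= pred_err_seq k
  /\ / pred_err_seq k + (1 - g ^ 2) / (s + pred_err_seq k) <= / pred_err_seq (S k).
Proof.
  intros HP.
  assert (Hg' : 0 <= g <= 1) by lra.
  pose proof (lam_nonneg k) as Hl.
  apply inv_increment_of_err_step with ((1 - (1 - g) * delta g c s a0 (S k)) ^ 2 * c ^ 2);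
    [lra | nra | exact (bias_bounds g c s _ _ Hg' Hs Hl) | exact HP |].
  unfold pred_err_seq. rewrite lam_succ, delta_succ, alpha_succ.
  exact (pred_err_update _ _ _ _ _ Hg' Hs Hl).
Qed.

Lemma pred_err_seq_pos k : 0 < pred_err_seq k.
Proof.
  induction k as [|k IH]; [|exact (proj1 (pred_err_seq_step k IH))].
  unfold pred_err_seq, pred_err, lam, delta; simpl.
  assert (0 < (1 - g) ^ 2 * (a0 * (a0 * 1)) * s) by (repeat apply Rmult_lt_0_compat; nra).
  assert (0 <= (1 - (1 - g) * a0) ^ 2 * c ^ 2) by (apply Rmult_le_pos; apply pow2_ge_0).
  lra.
Qed.

Lemma pred_err_seq_le_first k : pred_err_seq k <= pred_err_seq 0.
Proof.
  induction k as [|k IH]; [lra|].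
  pose proof (pred_err_seq_step k (pred_err_seq_pos k)). lra.
Qed.

Lemma pred_err_seq_cv : Un_cv pred_err_seq 0.
Proof.
  apply Un_cv_0_of_inv_increment with ((1 - g ^ 2) / (s + pred_err_seq 0)).
  - pose proof (pred_err_seq_pos 0). apply Rdiv_lt_0_compat; nra.
  - intros k. destruct (pred_err_seq_step k (pred_err_seq_pos k)) as [_ [_ Hinc]].
    enough ((1 - g ^ 2) / (s + pred_err_seq 0) <= (1 - g ^ 2) / (s + pred_err_seq k)) by lra.
    pose proof (pred_err_seq_pos k). pose proof (pred_err_seq_le_first k).
    unfold Rdiv. apply Rmult_le_compat_l; [nra|]. apply Rinv_le_contravar; lra.
Qed.

Lemma alpha_succ_bounds k :
  0 <= alpha g c s a0 (S k) <= / ((1 - g) * s) * pred_err_seq k.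
Proof.
  assert (Hg' : 0 <= g <= 1) by lra.
  pose proof (lam_nonneg k) as Hl.
  rewrite alpha_succ. set (d := delta g c s a0 (S k)).
  split; [exact (gain_nonneg g c s _ d Hg' Hs Hl)|].
  pose proof (gain_scaled_le g c s _ d Hg' Hs Hl) as Hle.
  assert (Hb : 0 < (1 - g) * s) by nra.
  apply (Rmult_le_reg_l ((1 - g) * s)); [exact Hb|].
  rewrite <- Rmult_assoc, Rinv_r, Rmult_1_l by lra. rewrite Rmult_comm. exact Hle.
Qed.

End Stepsizes.

Theorem theorem4 (g c s2 a0 : R) :
  0 < g < 1 -> 0 < s2 -> 0 < a0 <= 1 ->
  Un_cv (alpha g c s2 a0) 0.
Proof.
  intros Hg Hs Ha.
  apply CV_shift with 1%nat.
  apply Un_cv_0_squeeze with (pred_err_seq g c s2 a0) (/ ((1 - g) * s2)).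
  - intros n. rewrite Nat.add_1_r. exact (alpha_succ_bounds g c s2 a0 Hg Hs n).
  - exact (pred_err_seq_cv g c s2 a0 Hg Hs Ha).
Qed.
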